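(* Let $\mathcal{G}$ be a simple temporal clique on $n$ vertices and let $\mathcal{T}^+=(V,E^+_T)$ be obtained by the backward construction (for any choice of the arbitrary choices). Then the number of collectors is at most $n/2$.
   Context: A simple temporal clique is a pair $\mathcal{G}=(G,\lambda)$ where $G=(V,E)$ is the complete graph on a finite set $V$ of $n$ vertices and $\lambda:E\to\mathbb{N}$ assigns to each edge a single integer label such that any two distinct edges sharing an endpoint have different labels; the label of an arc $(x,y)$ is $\lambda(\{x,y\})$. For a vertex $v$, $e^+(v)$ is the edge incident to $v$ with largest label. Backward construction: let $E^+$ be the set of arcs $(v,u)$ with $\{u,v\}=e^+(v)$, except that if $e^+(u)=e^+(v)=\{u,v\}$ only one of the two arcs $(u,v),(v,u)$ is included (arbitrarily). Initialize $E^+_T:=E^+$. For every vertex $v$ of in-degree at least $2$ in $(V,E^+)$, let $(u_1,v),\dots,(u_\ell,v)$ be its in-arcs in $E^+$, where $(u_\ell,v)$ has the smallest label; for each $i<\ell$, if $u_i$ has in-degree $0$ in $(V,E^+)$, replace $(u_i,v)$ by $(v,u_i)$ in $E^+_T$, and otherwise remove $(u_i,v)$ from $E^+_T$. Set $\mathcal{T}^+=(V,E^+_T)$. A collector is a vertex of in-degree $0$ in $\mathcal{T}^+$. *)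

From mathcomp Require Import all_boot.
Set Implicit Arguments. Unset Strict Implicit. Unset Printing Implicit Defensive.

(* Simple temporal clique on vertex set V: the label of the edge {x,y}
   (x <> y) is lam x y; lam is symmetric (labels live on unordered edges),
   and distinct edges sharing an endpoint have distinct labels. The value
   lam x x is irrelevant. *)
Definition simple_temporal_clique (V : finType) (lam : V -> V -> nat) : Prop :=
  (forall x y : V, lam x y = lam y x) /\
  (forall x y z : V, x != y -> x != z -> y != z -> lam x y != lam x z).

Section Backward.
Variables (V : finType) (lam : V -> V -> nat).
(* [b] encodes the arbitrary choices: for a pair {u,v} with
   e^+(u) = e^+(v) = {u,v}, the arc (v,u) is kept iff b v u; b is a
   tournament (exactly one of b u v, b v u for u <> v). *)
Variable b : V -> V -> bool.

Definition is_eplus (v u : V) : bool :=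
  (u != v) && [forall w, (w != v) ==> (lam v w <= lam v u)].

Definition Eplus (v u : V) : bool :=
  is_eplus v u && (is_eplus u v ==> b v u).

Definition indeg_plus (v : V) : nat := #|[set u | Eplus u v]|.

Definition min_in (u v : V) : bool :=
  Eplus u v && [forall z, Eplus z v ==> (lam u v <= lam z v)].

Definition ET (x y : V) : bool :=
  (Eplus x y && ((indeg_plus y < 2) || min_in x y))
  || [&& Eplus y x, 2 <= indeg_plus x, ~~ min_in y x & indeg_plus y == 0].

Definition collectors : {set V} := [set v | [forall u, ~~ ET u v]].
End Backward.

From mathcomp Require Import all_boot.

Set Implicit Arguments.
Unset Strict Implicit.
Unset Printing Implicit Defensive.

(* Every collector v keeps its arc towards u = e^+(v) in T^+, so u is not a
   collector. Two distinct collectors cannot share that target u: u would have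
   in-degree at least 2 in E^+, so only its in-arc of smallest label survives,
   and distinct in-arcs at u carry distinct labels. Hence v |-> e^+(v) injects
   the collectors into the non-collectors. *)

Lemma double_card_leq_of_inj_setC (T : finType) (A : {set T}) (f : T -> T) :
  {in A &, injective f} -> {in A, forall x, f x \notin A} -> 2 * #|A| <= #|T|.
Proof.
move=> f_inj fA; rewrite mul2n -addnn -(cardsC A) leq_add2l.
rewrite -(card_in_imset f_inj); apply: subset_leq_card.
by apply/subsetP => _ /imsetP [x Ax ->]; rewrite inE fA.
Qed.

Section Backward.
Variables (V : finType) (lam : V -> V -> nat) (b : V -> V -> bool).

Lemma is_eplus_neq (v u : V) : is_eplus lam v u -> u != v.
Proof. by case/andP. Qed.

Lemma is_eplus_exists (v : V) : 1 < #|V| -> exists u, is_eplus lam v u.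
Proof.
move=> V_gt1; have [w0 w0v] : exists w, w != v.
  case/card_gt1P: V_gt1 => [x [y [_ _ xy]]].
  by case: (eqVneq x v) => [xv|]; [exists y; rewrite -xv eq_sym | exists x].
exists [arg max_(u > w0 | u != v) lam v u].
case: arg_maxnP => // u uv u_max.
by rewrite /is_eplus uv; apply/forallP => w; apply/implyP; apply: u_max.
Qed.

Lemma min_in_exists (u v : V) : Eplus lam b u v -> exists x, min_in lam b x v.
Proof.
move=> Euv; exists [arg min_(x < u | Eplus lam b x v) lam x v].
case: arg_minnP => // x Exv x_min.
by rewrite /min_in Exv; apply/forallP => z; apply/implyP; apply: x_min.
Qed.

Lemma indeg_plus_ge2 (x y v : V) :
  x != y -> Eplus lam b x v -> Eplus lam b y v -> 1 < indeg_plus lam b v.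
Proof.
move=> xy Exv Eyv; apply/card_gt1P; exists x, y.
by rewrite !inE Exv Eyv.
Qed.

(* The E^+ in-arc of v with smallest label always survives in T^+. *)
Lemma collector_no_Eplus_in (v : V) :
  v \in collectors lam b -> forall u, ~~ Eplus lam b u v.
Proof.
rewrite inE => /forallP v_coll u; apply/negP => /min_in_exists [x xv].
have := v_coll x; move/andP: (xv) => [Exv _].
by rewrite /ET Exv xv orbT.
Qed.

Hypothesis b_tournament : forall u v : V, u != v -> b u v = ~~ b v u.

Lemma collector_Eplus (v u : V) :
  v \in collectors lam b -> is_eplus lam v u -> Eplus lam b v u.
Proof.
move=> v_coll vu; rewrite /Eplus vu; apply/implyP => uv.
apply: contraT => bvu; have := collector_no_Eplus_in v_coll u.
by rewrite /Eplus uv vu (b_tournament (is_eplus_neq vu)) bvu.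
Qed.

Lemma collector_arc_kept (v u : V) :
  v \in collectors lam b -> is_eplus lam v u ->
  (indeg_plus lam b u < 2) || min_in lam b v u.
Proof.
(* Otherwise (v,u) is reversed into an arc of T^+ entering v, since v has
   in-degree 0 in E^+. *)
move=> v_coll vu; apply: contraT => /norP [indeg_u not_min].
have Evu := collector_Eplus v_coll vu.
have indeg_v : indeg_plus lam b v == 0.
  rewrite cards_eq0; apply/eqP/setP => x.
  by rewrite !inE (negPf (collector_no_Eplus_in v_coll x)).
move: v_coll; rewrite inE => /forallP /(_ u); rewrite /ET Evu.
by rewrite -leqNgt in indeg_u; rewrite indeg_u not_min indeg_v orbT.
Qed.

Lemma collector_ET (v u : V) :
  v \in collectors lam b -> is_eplus lam v u -> ET lam b v u.
Proof.
by move=> v_coll vu; rewrite /ET collector_Eplus // collector_arc_kept.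
Qed.

Lemma collector_eplus_not_collector (v u : V) :
  v \in collectors lam b -> is_eplus lam v u -> u \notin collectors lam b.
Proof.
move=> v_coll vu; rewrite inE negb_forall; apply/existsP; exists v.
by rewrite negbK collector_ET.
Qed.

Hypothesis lam_proper : simple_temporal_clique lam.

Lemma min_in_unique (x y v : V) : min_in lam b x v -> min_in lam b y v -> x = y.
Proof.
case: lam_proper => lam_sym lam_neq.
case/andP=> Exv /forallP x_min /andP [Eyv /forallP y_min].
apply/eqP; apply: contraT => xy.
have := lam_neq v x y (is_eplus_neq (andP Exv).1) (is_eplus_neq (andP Eyv).1) xy.
rewrite lam_sym [lam v y]lam_sym eqn_leq.
by rewrite (implyP (x_min y) Eyv) (implyP (y_min x) Exv).
Qed.

Lemma collector_eplus_inj (v1 v2 u : V) :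
  v1 \in collectors lam b -> v2 \in collectors lam b ->
  is_eplus lam v1 u -> is_eplus lam v2 u -> v1 = v2.
Proof.
move=> v1_coll v2_coll v1u v2u; apply/eqP; apply: contraT => v12.
have E1 := collector_Eplus v1_coll v1u; have E2 := collector_Eplus v2_coll v2u.
have indeg_u := leq_gtF (indeg_plus_ge2 v12 E1 E2).
move: (collector_arc_kept v1_coll v1u) (collector_arc_kept v2_coll v2u).
by rewrite indeg_u /= => m1 m2; rewrite (min_in_unique m1 m2) eqxx in v12.
Qed.

End Backward.

Theorem lemma5 (V : finType) (lam : V -> V -> nat) (b : V -> V -> bool) :
  2 <= #|V| ->
  simple_temporal_clique lam ->
  (forall u v : V, u != v -> b u v = ~~ b v u) ->
  2 * #|collectors lam b| <= #|V|.
Proof.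
move=> V_gt1 lam_proper b_tournament.
pose eplus v := odflt v [pick u | is_eplus lam v u].
have eplusP v : is_eplus lam v (eplus v).
  rewrite /eplus; case: pickP => [//|none].
  by have [u] := is_eplus_exists lam v V_gt1; rewrite none.
apply: (double_card_leq_of_inj_setC (f := eplus)).
- move=> v1 v2 v1_coll v2_coll e12.
  by apply: (collector_eplus_inj b_tournament lam_proper v1_coll v2_coll (eplusP v1)); rewrite e12.
- by move=> v v_coll; apply: (collector_eplus_not_collector b_tournament v_coll (eplusP v)).
Qed.
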